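(* Consider the discrete-time $Geo^X/G_r^{(a,b)}/1$ queue with single ($\delta=0$) or multiple ($\delta=1$) vacations described in the context, with $\rho<1$. Let $P^+(x)=\sum_{n\ge0}p^+_nx^n$ be the pgf of the queue length at service completion epochs. Then for all complex $x$ with $|x|\le1$ and $x^b\ne K^{(b)}(x)$, $$P^+(x)=\frac{\begin{aligned}&\sum_{n=0}^{a-1}p^+_nx^n\{H(x)-1\}K^{(b)}(x)+\sum_{n=0}^{a-1}Q^+_n\Big[x^n\{\delta H(x)-1\}K^{(b)}(x)\\&\quad+x^b(1-\delta)\sum_{j=n}^{a-1}e_{j,n}\Big(\sum_{i=a}^bg_{i-j}K^{(i)}(x)+\sum_{i=b+1-j}^\infty g_ix^{i+j-b}K^{(b)}(x)\Big)\Big]\\&\quad+\sum_{n=a}^{b-1}(p^+_n+Q^+_n)\{x^bK^{(n)}(x)-x^nK^{(b)}(x)\}\end{aligned}}{x^b-K^{(b)}(x)}.$$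
   Context: Time is slotted. Fix integers $1\le a\le b$, $\lambda\in(0,1)$, $\bar\lambda=1-\lambda$, and a group-size distribution $(g_m)_{m\ge1}$ with finite mean $\bar g$ and pgf $G(z)=\sum_{m\ge1}g_mz^m$; $g_m=0$ for $m\le0$. In each slot a group arrives with probability $\lambda$, with size distribution $(g_m)$. Service follows the $(a,b)$ bulk rule (start only if at least $a$ wait; take all if $a\le r\le b$ wait, exactly $b$ if more than $b$ wait). A batch of size $r$ ($a\le r\le b$) has service-time pmf $s_r(n)$, $n\ge1$, pgf $S_r^*(z)$, mean $s_r$, $\mu_b=1/s_b$. Vacation times have pmf $v_n$, $n\ge1$, pgf $V^*(z)$, finite mean. $\delta=0$: single vacation (server stays dormant after a vacation until $a$ wait); $\delta=1$: multiple vacations. $\rho=\lambda\bar g/(b\mu_b)<1$. Stationary probabilities $p_{n,0}$ ($0\le n\le a-1$, dormant), $p_{n,r}(u)$ ($n\ge0$ waiting, batch size $a\le r\le b$ in service, remaining service $u\ge1$), $Q_n(u)$ ($n\ge0$ waiting, on vacation, remaining vacation $u\ge1$) satisfy: (E1) $p_{0,0}=(1-\delta)[\bar\lambda p_{0,0}+\bar\lambda Q_0(1)]$; (E2) $p_{n,0}=(1-\delta)[\bar\lambda p_{n,0}+\lambda\sum_{i=1}^ng_ip_{n-i,0}+\bar\lambda Q_n(1)+\lambda\sum_{i=1}^ng_iQ_{n-i}(1)]$, $1\le n\le a-1$; (E3) $p_{0,r}(u)=\bar\lambda p_{0,r}(u+1)+s_r(u)\big[\sum_{m=a}^b(\bar\lambda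 p_{r,m}(1)+\lambda\sum_{i=1}^rg_ip_{r-i,m}(1))+\bar\lambda Q_r(1)+\lambda\sum_{i=1}^rg_iQ_{r-i}(1)+(1-\delta)\lambda\sum_{i=0}^{a-1}g_{r-i}p_{i,0}\big]$, $a\le r\le b$; (E4) $p_{n,r}(u)=\bar\lambda p_{n,r}(u+1)+\lambda\sum_{i=1}^ng_ip_{n-i,r}(u+1)$, $n\ge1$, $a\le r\le b-1$; (E5) $p_{n,b}(u)=\bar\lambda p_{n,b}(u+1)+\lambda\sum_{i=1}^ng_ip_{n-i,b}(u+1)+s_b(u)\big[\sum_{m=a}^b(\bar\lambda p_{n+b,m}(1)+\lambda\sum_{i=1}^{n+b}g_ip_{n+b-i,m}(1))+\bar\lambda Q_{n+b}(1)+\lambda\sum_{i=1}^{n+b}g_iQ_{n+b-i}(1)+(1-\delta)\lambda\sum_{i=0}^{a-1}g_{n+b-i}p_{i,0}\big]$, $n\ge1$; (E6) $Q_0(u)=\bar\lambda Q_0(u+1)+\bar\lambda(\sum_{m=a}^bp_{0,m}(1)+\delta Q_0(1))v_u$; (E7) $Q_n(u)=\bar\lambda Q_n(u+1)+\lambda\sum_{i=1}^ng_iQ_{n-i}(u+1)+v_u\big[\bar\lambda(\sum_{m=a}^bp_{n,m}(1)+\delta Q_n(1))+\lambda\sum_{i=1}^ng_i(\sum_{m=a}^bp_{n-i,m}(1)+\delta Q_{n-i}(1))\big]$, $1\le n\le a-1$; (E8) $Q_n(u)=\bar\lambda Q_n(u+1)+\lambda\sum_{i=1}^ng_iQ_{n-i}(u+1)$,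 $n\ge a$; (N) $(1-\delta)\sum_{n=0}^{a-1}p_{n,0}+\sum_{n,r,u}p_{n,r}(u)+\sum_{n,u}Q_n(u)=1$. With $\tau=\sum_{m\ge0}\sum_{r=a}^bp_{m,r}(1)+\sum_{m\ge0}Q_m(1)$: $p^+_{0,r}=\tau^{-1}\bar\lambda p_{0,r}(1)$, $p^+_{n,r}=\tau^{-1}(\bar\lambda p_{n,r}(1)+\lambda\sum_{i=1}^ng_ip_{n-i,r}(1))$ ($n\ge1$); $p^+_n=\sum_{r=a}^bp^+_{n,r}$; $Q^+_0=\tau^{-1}\bar\lambda Q_0(1)$, $Q^+_n=\tau^{-1}(\bar\lambda Q_n(1)+\lambda\sum_{i=1}^ng_iQ_{n-i}(1))$ ($n\ge1$). $K^{(r)}(x)=S_r^*(\bar\lambda+\lambda G(x))$, $H(x)=V^*(\bar\lambda+\lambda G(x))$. $e_{n,i}$ ($0\le i\le n$): $e_{n,n}=1$, $e_{n,n-1}=g_1$, $e_{n,i}=\sum_{j=i+1}^{n-1}e_{n,j}g_{j-i}+g_{n-i}$ for $0\le i\le n-2$. *)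

From Stdlib Require Import Reals List.
From Coquelicot Require Import Coquelicot.
Open Scope R_scope.

Definition rsum (f : nat -> R) (m n : nat) : R := sum_n_m f m n.
Definition csum (f : nat -> C) (m n : nat) : C := sum_n_m f m n.

Definition Cser (c : nat -> C) : C :=
  (Series (fun n => Re (c n)), Series (fun n => Im (c n))).

Definition pgf (f : nat -> R) (z : C) : C :=
  Cser (fun n => (RtoC (f n) * Cpow z n)%C).

(* The sequence e_{n,i} (0 <= i <= n) of the paper:
   e_{n,n} = 1, e_{n,n-1} = g_1,
   e_{n,i} = sum_{j=i+1}^{n-1} e_{n,j} g_{j-i} + g_{n-i}  (0 <= i <= n-2).
   etab g n k is the list [e_{n,n}; e_{n,n-1}; ...; e_{n,n-k}]
   (computed by recursion on k = n - i). *)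
Fixpoint etab (g : nat -> R) (n k : nat) : list R :=
  match k with
  | O => 1 :: nil
  | S k' =>
      let l := etab g n k' in
      let i := (n - S k')%nat in
      let val :=
        match k' with
        | O => g 1%nat
        | _ => rsum (fun j => nth (n - j)%nat l 0 * g (j - i)%nat) (S i) (n - 1)
               + g (n - i)%nat
        end in
      l ++ val :: nil
  end.

Definition e_coef (g : nat -> R) (n i : nat) : R :=
  nth (n - i)%nat (etab g n (n - i)) 0.

(* Model primitives.  Indices: g m (group size m, g 0 = 0), s r n (service
   time pmf of a batch of size r), v n (vacation pmf), p0 n = p_{n,0},
   p n r u = p_{n,r}(u), Q n u = Q_n(u). *)

Definition is_pmf1 (f : nat -> R) : Prop :=
  f 0%nat = 0 /\ (forall n, 0 <= f n) /\ is_series f 1 /\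
  ex_series (fun n => INR n * f n).

Definition mean (f : nat -> R) : R := Series (fun n => INR n * f n).

Definition stationary (a b : nat) (lam delta : R) (g : nat -> R)
  (s : nat -> nat -> R) (v : nat -> R)
  (p0 : nat -> R) (p : nat -> nat -> nat -> R) (Q : nat -> nat -> R) : Prop :=
  let lb := 1 - lam in
  (forall n, 0 <= p0 n) /\ (forall n r u, 0 <= p n r u) /\ (forall n u, 0 <= Q n u) /\
  p0 0%nat = (1 - delta) * (lb * p0 0%nat + lb * Q 0%nat 1%nat) /\
  (forall n, (1 <= n <= a - 1)%nat ->
     p0 n = (1 - delta) * (lb * p0 n + lam * rsum (fun i => g i * p0 (n - i)%nat) 1 n
                           + lb * Q n 1%nat
                           + lam * rsum (fun i => g i * Q (n - i)%nat 1%nat) 1 n)) /\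
  (forall r u, (a <= r <= b)%nat -> (1 <= u)%nat ->
     p 0%nat r u = lb * p 0%nat r (S u)
       + s r u * (rsum (fun m => lb * p r m 1%nat
                                 + lam * rsum (fun i => g i * p (r - i)%nat m 1%nat) 1 r) a b
                  + lb * Q r 1%nat + lam * rsum (fun i => g i * Q (r - i)%nat 1%nat) 1 r
                  + (1 - delta) * lam * rsum (fun i => g (r - i)%nat * p0 i) 0 (a - 1))) /\
  (forall n r u, (1 <= n)%nat -> (a <= r <= b - 1)%nat -> (1 <= u)%nat ->
     p n r u = lb * p n r (S u) + lam * rsum (fun i => g i * p (n - i)%nat r (S u)) 1 n) /\
  (forall n u, (1 <= n)%nat -> (1 <= u)%nat ->
     p n b u = lb * p n b (S u) + lam * rsum (fun i => g i * p (n - i)%nat b (S u)) 1 n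
       + s b u * (rsum (fun m => lb * p (n + b)%nat m 1%nat
                      + lam * rsum (fun i => g i * p (n + b - i)%nat m 1%nat) 1 (n + b)) a b
                  + lb * Q (n + b)%nat 1%nat
                  + lam * rsum (fun i => g i * Q (n + b - i)%nat 1%nat) 1 (n + b)
                  + (1 - delta) * lam * rsum (fun i => g (n + b - i)%nat * p0 i) 0 (a - 1))) /\
  (forall u, (1 <= u)%nat ->
     Q 0%nat u = lb * Q 0%nat (S u)
       + lb * (rsum (fun m => p 0%nat m 1%nat) a b + delta * Q 0%nat 1%nat) * v u) /\
  (forall n u, (1 <= n <= a - 1)%nat -> (1 <= u)%nat ->
     Q n u = lb * Q n (S u) + lam * rsum (fun i => g i * Q (n - i)%nat (S u)) 1 n
       + v u * (lb * (rsum (fun m => p n m 1%nat) a b + delta * Q n 1%nat)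
                + lam * rsum (fun i => g i * (rsum (fun m => p (n - i)%nat m 1%nat) a b
                                              + delta * Q (n - i)%nat 1%nat)) 1 n)) /\
  (forall n u, (a <= n)%nat -> (1 <= u)%nat ->
     Q n u = lb * Q n (S u) + lam * rsum (fun i => g i * Q (n - i)%nat (S u)) 1 n) /\
  (forall n r, ex_series (fun u => p n r (S u))) /\
  (forall n, ex_series (fun u => Q n (S u))) /\
  is_series (fun n => rsum (fun r => Series (fun u => p n r (S u))) a b
                      + Series (fun u => Q n (S u)))
            (1 - (1 - delta) * rsum p0 0 (a - 1)).

Definition tau (a b : nat) (p : nat -> nat -> nat -> R) (Q : nat -> nat -> R) : R :=
  Series (fun m => rsum (fun r => p m r 1%nat) a b + Q m 1%nat).

Definition pplus (a b : nat) (lam : R) (g : nat -> R)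
  (p : nat -> nat -> nat -> R) (Q : nat -> nat -> R) (n : nat) : R :=
  match n with
  | O => / tau a b p Q * rsum (fun r => (1 - lam) * p 0%nat r 1%nat) a b
  | _ => / tau a b p Q * rsum (fun r => (1 - lam) * p n r 1%nat
                  + lam * rsum (fun i => g i * p (n - i)%nat r 1%nat) 1 n) a b
  end.

Definition Qplus (a b : nat) (lam : R) (g : nat -> R)
  (p : nat -> nat -> nat -> R) (Q : nat -> nat -> R) (n : nat) : R :=
  match n with
  | O => / tau a b p Q * ((1 - lam) * Q 0%nat 1%nat)
  | _ => / tau a b p Q * ((1 - lam) * Q n 1%nat
                  + lam * rsum (fun i => g i * Q (n - i)%nat 1%nat) 1 n)
  end.

Definition Kf (lam : R) (g : nat -> R) (s : nat -> nat -> R) (r : nat) (x : C) : C :=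
  pgf (s r) (RtoC (1 - lam) + RtoC lam * pgf g x)%C.

Definition Hf (lam : R) (g : nat -> R) (v : nat -> R) (x : C) : C :=
  pgf v (RtoC (1 - lam) + RtoC lam * pgf g x)%C.

(* Read p_{n,r}(u) and Q_n(u) as functions of the remaining service or vacation
   time u.  The stationary equations say that f(u) is obtained from f(u+1) by one slot of group
   arrivals, plus the mass of fresh service (resp. vacation) starts weighted by s_r(u) (resp. v_u).
   An arrival slot multiplies generating functions by w(x) = 1 - lam + lam G(x), so unrolling the
   recursion in u turns the weights into S_r^*(w(x)) = K^(r)(x) and V^*(w(x)) = H(x):
     sum_n tau p^+_n x^n = sum_{r=a}^{b-1} K^(r)(x) D_r + K^(b)(x) x^-b (D(x) - sum_{n<b} D_n x^n),
     sum_n tau Q^+_n x^n = H(x) sum_{n<a} E_n x^n,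
   where D_n (resp. E_n) is the mass of service (resp. vacation) starts with n waiting.  Since D(x)
   is itself built from these two generating functions and from the groups joining a dormant
   server, this is a linear equation for P^+(x) with coefficient x^b - K^(b)(x).  For a single
   vacation the dormant probabilities p_{n,0} are eliminated by inverting the triangular system
   (E1), (E2), whose inverse is given by the coefficients e_{n,i}. *)

From Stdlib Require Import Reals Arith Lia Lra List.
From Coquelicot Require Import Coquelicot.
Open Scope R_scope.

Lemma sum_n_m_swap {G : AbelianMonoid} (F : nat -> nat -> G) m1 n1 m2 n2 :
  sum_n_m (fun i => sum_n_m (fun j => F i j) m2 n2) m1 n1 =
  sum_n_m (fun j => sum_n_m (fun i => F i j) m1 n1) m2 n2.
Proof.
  induction n1 as [|n1 IH].
  - destruct m1.
    + rewrite sum_n_n. apply sum_n_m_ext; intros j. now rewrite sum_n_n.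
    + rewrite sum_n_m_zero by lia. rewrite <- (sum_n_m_const_zero m2 n2).
      apply sum_n_m_ext; intros j. now rewrite sum_n_m_zero by lia.
  - destruct (le_lt_dec m1 (S n1)).
    + rewrite sum_n_Sm, IH by lia. rewrite <- sum_n_m_plus.
      apply sum_n_m_ext; intros j. now rewrite sum_n_Sm by lia.
    + rewrite sum_n_m_zero by lia. rewrite <- (sum_n_m_const_zero m2 n2).
      apply sum_n_m_ext; intros j. now rewrite sum_n_m_zero by lia.
Qed.

Lemma sum_n_m_triangle {G : AbelianMonoid} (F : nat -> nat -> G) N :
  sum_n_m (fun i => sum_n_m (fun n => F i n) 0 i) 0 N =
  sum_n_m (fun n => sum_n_m (fun i => F i n) n N) 0 N.
Proof.
  induction N as [|N IH].
  - now rewrite !sum_n_n.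
  - rewrite sum_n_Sm, IH by lia.
    rewrite (sum_n_Sm (fun n => sum_n_m (fun i => F i n) n (S N))) by lia.
    rewrite sum_n_n.
    rewrite (sum_n_m_ext_loc (fun n => sum_n_m (fun i => F i n) n (S N))
               (fun n => plus (sum_n_m (fun i => F i n) n N) (F (S N) n)) 0 N)
      by (intros n Hn; apply sum_n_Sm; lia).
    rewrite sum_n_m_plus, (sum_n_Sm (fun n => F (S N) n)) by lia.
    now rewrite plus_assoc.
Qed.

Lemma sum_n_m_reflect {G : AbelianMonoid} (f : nat -> G) m n :
  sum_n_m f m n = sum_n_m (fun k => f (m + n - k)%nat) m n.
Proof.
  induction n as [|n IH].
  - destruct m.
    + now rewrite !sum_n_n.
    + now rewrite !sum_n_m_zero by lia.
  - destruct (le_lt_dec m (S n)) as [Hm|Hm].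
    + destruct (Nat.eq_dec m (S n)) as [->|Hne]; [rewrite !sum_n_n; f_equal; lia|].
      rewrite sum_n_Sm, (sum_Sn_m (fun k => f (m + S n - k)%nat)) by lia.
      rewrite <- sum_n_m_S, IH, plus_comm.
      replace (m + S n - m)%nat with (S n) by lia. f_equal.
      apply sum_n_m_ext_loc; intros k Hk. f_equal; lia.
    + now rewrite !sum_n_m_zero by lia.
Qed.

Lemma rsum_ext (f h : nat -> R) m n :
  (forall k, (m <= k <= n)%nat -> f k = h k) -> rsum f m n = rsum h m n.
Proof. apply sum_n_m_ext_loc. Qed.

Lemma rsum_empty (f : nat -> R) m n : (n < m)%nat -> rsum f m n = 0.
Proof. exact (sum_n_m_zero f m n). Qed.

Lemma rsum_first (f : nat -> R) m n : (m <= n)%nat -> rsum f m n = f m + rsum f (S m) n.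
Proof. exact (sum_Sn_m f m n). Qed.

Lemma rsum_last (f : nat -> R) m n : (m <= S n)%nat -> rsum f m (S n) = rsum f m n + f (S n).
Proof. exact (sum_n_Sm f m n). Qed.

Lemma rsum_plus (f h : nat -> R) m n : rsum (fun k => f k + h k) m n = rsum f m n + rsum h m n.
Proof. exact (sum_n_m_plus f h m n). Qed.

Lemma rsum_scal (c : R) (f : nat -> R) m n : rsum (fun k => c * f k) m n = c * rsum f m n.
Proof. exact (sum_n_m_mult_l (K := R_Ring) c f m n). Qed.

Lemma rsum_minus (f h : nat -> R) m n : rsum (fun k => f k - h k) m n = rsum f m n - rsum h m n.
Proof.
  rewrite (rsum_ext _ (fun k => f k + -1 * h k)) by (intros; ring).
  rewrite rsum_plus, rsum_scal. ring.
Qed.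

Lemma rsum_nonneg (f : nat -> R) m n : (forall k, 0 <= f k) -> 0 <= rsum f m n.
Proof.
  intros Hf. pose proof (sum_n_m_le (fun _ => 0) f m n Hf) as H.
  now rewrite (sum_n_m_const_zero (G := R_AbelianMonoid)) in H.
Qed.

Lemma rsum_term_le (f : nat -> R) m n r :
  (forall k, 0 <= f k) -> (m <= r <= n)%nat -> f r <= rsum f m n.
Proof.
  intros Hf Hr. unfold rsum. rewrite (sum_n_m_Chasles f m r n) by lia.
  change (f r <= rsum f m r + rsum f (S r) n).
  pose proof (rsum_nonneg f (S r) n Hf).
  destruct (Nat.eq_dec r m) as [->|Hne].
  - unfold rsum at 1. rewrite sum_n_n. lra.
  - destruct r as [|r]; [lia|]. rewrite rsum_last by lia.
    pose proof (rsum_nonneg f m r Hf). lra.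
Qed.

Lemma rsum_swap (F : nat -> nat -> R) m1 n1 m2 n2 :
  rsum (fun i => rsum (fun j => F i j) m2 n2) m1 n1 =
  rsum (fun j => rsum (fun i => F i j) m1 n1) m2 n2.
Proof. apply sum_n_m_swap. Qed.

Lemma rsum_triangle (F : nat -> nat -> R) N :
  rsum (fun i => rsum (fun n => F i n) 0 i) 0 N = rsum (fun n => rsum (fun i => F i n) n N) 0 N.
Proof. apply sum_n_m_triangle. Qed.

Lemma rsum_indicator (f : nat -> R) j : rsum (fun m => if Nat.eqb m j then f m else 0) 0 j = f j.
Proof.
  destruct j as [|j]; [unfold rsum; now rewrite sum_n_n|].
  rewrite rsum_last by lia. rewrite Nat.eqb_refl, (rsum_ext _ (fun _ => 0 * 0)).
  - rewrite rsum_scal. ring.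
  - intros k Hk. destruct (Nat.eqb_spec k (S j)); [lia|ring].
Qed.

Lemma csum_ext (f h : nat -> C) m n :
  (forall k, (m <= k <= n)%nat -> f k = h k) -> csum f m n = csum h m n.
Proof. apply sum_n_m_ext_loc. Qed.

Lemma csum_plus (f h : nat -> C) m n :
  csum (fun k => f k + h k)%C m n = (csum f m n + csum h m n)%C.
Proof. exact (sum_n_m_plus f h m n). Qed.

Lemma csum_scal_l (c : C) (f : nat -> C) m n : csum (fun k => c * f k)%C m n = (c * csum f m n)%C.
Proof. exact (sum_n_m_mult_l (K := C_Ring) c f m n). Qed.

Lemma csum_scal_r (c : C) (f : nat -> C) m n : csum (fun k => f k * c)%C m n = (csum f m n * c)%C.
Proof. exact (sum_n_m_mult_r (K := C_Ring) c f m n). Qed.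

Lemma csum_lin (f h : nat -> C) (u w : C) m n :
  csum (fun k => u * f k + w * h k)%C m n = (u * csum f m n + w * csum h m n)%C.
Proof. now rewrite csum_plus, !csum_scal_l. Qed.

Lemma csum_cut (f : nat -> C) m k n :
  (m < k <= S n)%nat -> csum f m n = (csum f m (k - 1) + csum f k n)%C.
Proof.
  intros Hk. unfold csum. rewrite (sum_n_m_Chasles f m (k - 1) n) by lia.
  now replace (S (k - 1)) with k by lia.
Qed.

Lemma csum_last (f : nat -> C) m n :
  (m <= n)%nat -> (1 <= n)%nat -> csum f m n = (csum f m (n - 1) + f n)%C.
Proof.
  intros Hm Hn. destruct n as [|n]; [lia|]. unfold csum.
  rewrite sum_n_Sm by lia. now replace (S n - 1)%nat with n by lia.
Qed.

Lemma csum_swap (F : nat -> nat -> C) m1 n1 m2 n2 :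
  csum (fun i => csum (fun j => F i j) m2 n2) m1 n1 =
  csum (fun j => csum (fun i => F i j) m1 n1) m2 n2.
Proof. apply sum_n_m_swap. Qed.

Lemma csum_triangle (F : nat -> nat -> C) N :
  csum (fun i => csum (fun n => F i n) 0 i) 0 N = csum (fun n => csum (fun i => F i n) n N) 0 N.
Proof. apply sum_n_m_triangle. Qed.

Lemma RtoC_rsum (f : nat -> R) m n : RtoC (rsum f m n) = csum (fun k => RtoC (f k)) m n.
Proof.
  unfold rsum, csum. destruct (le_lt_dec m n) as [Hmn|Hmn]; [|now rewrite !sum_n_m_zero].
  induction n as [|n IH].
  - replace m with O by lia. now rewrite !sum_n_n.
  - destruct (Nat.eq_dec m (S n)) as [->|Hne]; [now rewrite !sum_n_n|].
    rewrite !sum_n_Sm, <- IH by lia. apply RtoC_plus.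
Qed.

Lemma is_series_finite_support {K : AbsRing} {V : NormedModule K} (a : nat -> V) N :
  (forall k, (N < k)%nat -> a k = zero) -> is_series a (sum_n a N).
Proof.
  intros Ha. unfold is_series.
  apply (filterlim_ext_loc (fun _ => sum_n a N)); [|apply filterlim_const].
  exists N; intros n Hn. unfold sum_n.
  destruct (Nat.eq_dec n N) as [->|Hne]; [reflexivity|].
  rewrite (sum_n_m_Chasles a 0 N n), (sum_n_m_ext_loc a (fun _ => zero) (S N) n)
    by (intros; try apply Ha; lia).
  now rewrite sum_n_m_const_zero, plus_zero_r.
Qed.

Lemma is_series_zero {K : AbsRing} {V : NormedModule K} :
  is_series (fun _ : nat => (zero : V)) zero.
Proof.
  pose proof (is_series_finite_support (fun _ : nat => (zero : V)) 0 (fun _ _ => eq_refl)) as H.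
  now rewrite sum_O in H.
Qed.

Lemma is_series_sum_n_m {K : AbsRing} {V : NormedModule K}
  (a : nat -> nat -> V) (L : nat -> V) m k :
  (forall r, (m <= r <= k)%nat -> is_series (a r) (L r)) ->
  is_series (fun n => sum_n_m (fun r => a r n) m k) (sum_n_m L m k).
Proof.
  intros Ha. induction k as [|k IH].
  - destruct m.
    + rewrite sum_n_n. apply (is_series_ext (a 0%nat)); [|apply Ha; lia].
      intros n. now rewrite sum_n_n.
    + rewrite sum_n_m_zero by lia. apply (is_series_ext (fun _ => zero)); [|apply is_series_zero].
      intros n. now rewrite sum_n_m_zero by lia.
  - destruct (le_lt_dec m (S k)) as [Hm|Hm].
    + rewrite sum_n_Sm by lia.
      apply (is_series_ext (fun n => plus (sum_n_m (fun r => a r n) m k) (a (S k) n))).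
      * intros n. now rewrite sum_n_Sm by lia.
      * destruct (le_lt_dec m k).
        -- apply is_series_plus; [apply IH; intros; apply Ha|apply Ha]; lia.
        -- rewrite sum_n_m_zero, plus_zero_l by lia.
           apply (is_series_ext (a (S k))); [|apply Ha; lia].
           intros n. now rewrite sum_n_m_zero, plus_zero_l by lia.
    + rewrite sum_n_m_zero by lia. apply (is_series_ext (fun _ => zero)); [|apply is_series_zero].
      intros n. now rewrite sum_n_m_zero by lia.
Qed.

Lemma norm_series_le {K : AbsRing} {V : NormedModule K} (a : nat -> V) (c : nat -> R) l M :
  is_series a l -> (forall n, norm (a n) <= c n) -> is_series c M -> norm l <= M.
Proof.
  intros Ha Hc HM. change (Rbar_le (norm l) M).
  apply (filterlim_le (F := eventually) (fun n => norm (sum_n a n)) (sum_n c) (norm l) M).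
  - exists O; intros n _. unfold sum_n.
    eapply Rle_trans; [apply norm_sum_n_m|]. now apply sum_n_m_le.
  - eapply filterlim_comp; [exact Ha | apply filterlim_norm].
  - exact HM.
Qed.

Lemma eq_limit_of_vanishing_error {K : AbsRing} {V : NormedModule K} (X L : V) (Y B : nat -> V) :
  (forall k, X = plus (Y k) (B k)) ->
  filterlim Y eventually (locally L) -> filterlim B eventually (locally (zero : V)) -> X = L.
Proof.
  intros HX HY HB.
  assert (Hsum : filterlim (fun k => plus (Y k) (B k)) eventually (locally (plus L (zero : V))))
    by (apply (filterlim_comp_2 (F := eventually) Y B plus HY HB), filterlim_plus).
  rewrite plus_zero_r in Hsum.
  refine (filterlim_locally_unique (F := eventually) (fun _ : nat => X) X L _ _);
    [apply filterlim_const|].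
  now apply (filterlim_ext (fun k => plus (Y k) (B k))).
Qed.

Lemma sum_n_le_series (f : nat -> R) l K : (forall n, 0 <= f n) -> is_series f l -> sum_n f K <= l.
Proof.
  intros Hf Hl. apply (is_lim_seq_incr_compare (sum_n f) l Hl).
  intros n. rewrite sum_Sn. change (sum_n f n <= sum_n f n + f (S n)). pose proof (Hf (S n)). lra.
Qed.

Lemma term_le_series (f : nat -> R) l k : (forall n, 0 <= f n) -> is_series f l -> f k <= l.
Proof.
  intros Hf Hl. eapply Rle_trans; [|exact (sum_n_le_series f l k Hf Hl)].
  destruct k as [|k]; [rewrite sum_O; lra|]. rewrite sum_Sn.
  change (f (S k) <= rsum f 0 k + f (S k)). pose proof (rsum_nonneg f 0 k Hf). lra.
Qed.

Lemma Series_nonneg (f : nat -> R) : (forall n, 0 <= f n) -> ex_series f -> 0 <= Series f.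
Proof.
  intros Hf Ef. apply (Rle_trans _ (f O)); [apply Hf|].
  apply term_le_series; [exact Hf|]. now apply Series_correct.
Qed.

Lemma ex_series_rsum (F : nat -> nat -> R) m k :
  (forall r, (m <= r <= k)%nat -> ex_series (F r)) ->
  ex_series (fun n => rsum (fun r => F r n) m k).
Proof.
  intros HF. eexists. apply (is_series_sum_n_m (V := R_NormedModule) F (fun r => Series (F r))).
  intros r Hr. now apply Series_correct, HF.
Qed.

Lemma ex_series_columns (f : nat -> nat -> R) :
  (forall n u, 0 <= f n u) -> (forall n, ex_series (f n)) -> ex_series (fun n => Series (f n)) ->
  (forall u, ex_series (fun n => f n u)) /\ ex_series (fun u => Series (fun n => f n u)).
Proof.
  intros Hf Hrow Hsum.
  assert (Hcol : forall u, ex_series (fun n => f n u)).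
  { intros u. refine (ex_series_le (V := R_CompleteNormedModule) _ _ _ Hsum).
    intros n. unfold norm; simpl. rewrite Rabs_pos_eq by apply Hf.
    apply term_le_series; [apply Hf|apply Series_correct, Hrow]. }
  split; [exact Hcol|].
  assert (Hpos : forall u, 0 <= Series (fun n => f n u))
    by (intros u; apply Series_nonneg; [intros; apply Hf | apply Hcol]).
  destruct (ex_finite_lim_seq_incr (sum_n (fun u => Series (fun n => f n u)))
              (Series (fun n => Series (f n)))) as [l Hl].
  - intros K. rewrite sum_Sn.
    change (sum_n (fun u => Series (fun n => f n u)) K <=
            sum_n (fun u => Series (fun n => f n u)) K + Series (fun n => f n (S K))).
    pose proof (Hpos (S K)). lra.
  - intros K.
    assert (E := is_series_unique _ _ (is_series_sum_n_m (V := R_NormedModule) (fun u n => f n u)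
                   (fun u => Series (fun n => f n u)) 0 K (fun u _ => Series_correct _ (Hcol u)))).
    apply (Rle_trans _ (Series (fun n => rsum (fun u => f n u) 0 K))); [right; symmetry; exact E|].
    apply Series_le; [|exact Hsum]. intros n. split; [apply rsum_nonneg; intros; apply Hf|].
    apply sum_n_le_series; [apply Hf | apply Series_correct, Hrow].
  - exists l. exact Hl.
Qed.

(* Coquelicot makes [C] a normed module over both [R] and [C]; we fix the complex structure. *)
Notation is_Cseries a l := (@is_series C_AbsRing C_NormedModule a l).

Lemma Rabs_Im_le_Cmod (c : C) : Rabs (Im c) <= Cmod c.
Proof.
  destruct c as [r i]. unfold Cmod; simpl.
  rewrite <- sqrt_Rsqr_abs. apply sqrt_le_1_alt. unfold Rsqr. nra.
Qed.

Lemma Re_sum_n (a : nat -> C) n : Re (sum_n a n) = sum_n (fun k => Re (a k)) n.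
Proof. induction n as [|n IH]; [now rewrite !sum_O | rewrite !sum_Sn, <- IH; reflexivity]. Qed.

Lemma Im_sum_n (a : nat -> C) n : Im (sum_n a n) = sum_n (fun k => Im (a k)) n.
Proof. induction n as [|n IH]; [now rewrite !sum_O | rewrite !sum_Sn, <- IH; reflexivity]. Qed.

Lemma is_Cseries_iff (a : nat -> C) (l : C) :
  is_Cseries a l <->
  is_series (fun n => Re (a n)) (Re l) /\ is_series (fun n => Im (a n)) (Im l).
Proof.
  unfold is_series. split.
  - intros H; split; apply filterlim_locally; intros eps;
      generalize (proj1 (filterlim_locally _ _) H eps); apply filter_imp;
      intros n [B1 B2]; [rewrite <- Re_sum_n | rewrite <- Im_sum_n]; assumption.
  - intros [H1 H2]. apply filterlim_locally; intros eps.
    generalize (filter_and _ _ (proj1 (filterlim_locally _ _) H1 eps)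
                               (proj1 (filterlim_locally _ _) H2 eps)).
    apply filter_imp. intros n [B1 B2].
    split; [rewrite Re_sum_n | rewrite Im_sum_n]; assumption.
Qed.

Lemma Cser_correct (a : nat -> C) (l : C) : is_Cseries a l -> Cser a = l.
Proof.
  intros [H1 H2]%is_Cseries_iff. unfold Cser.
  rewrite (is_series_unique _ _ H1), (is_series_unique _ _ H2). now destruct l.
Qed.

Lemma is_Cseries_mult (a b : nat -> C) (la lb : C) :
  is_Cseries a la -> is_Cseries b lb ->
  ex_series (fun n => Cmod (a n)) -> ex_series (fun n => Cmod (b n)) ->
  is_Cseries (fun n => sum_n (fun k => a k * b (n - k)%nat)%C n) (la * lb)%C.
Proof.
  intros [Ha1 Ha2]%is_Cseries_iff [Hb1 Hb2]%is_Cseries_iff Ea Eb.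
  assert (abs_part : forall (c : nat -> C) (P : C -> R),
    (forall z, Rabs (P z) <= Cmod z) -> ex_series (fun n => Cmod (c n)) ->
    ex_series (fun n => Rabs (P (c n)))).
  { intros c P HP Ec.
    refine (ex_series_le (V := R_CompleteNormedModule) (fun n => Rabs (P (c n))) _ _ Ec).
    intros n. unfold norm; simpl. rewrite Rabs_Rabsolu. apply HP. }
  pose proof (abs_part a Re re_le_Cmod Ea) as ReA.
  pose proof (abs_part a Im Rabs_Im_le_Cmod Ea) as ImA.
  pose proof (abs_part b Re re_le_Cmod Eb) as ReB.
  pose proof (abs_part b Im Rabs_Im_le_Cmod Eb) as ImB.
  apply is_Cseries_iff; split.
  - eapply is_series_ext;
      [|apply (is_series_minus _ _ _ _ (is_series_mult _ _ _ _ Ha1 Hb1 ReA ReB)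
                                       (is_series_mult _ _ _ _ Ha2 Hb2 ImA ImB))].
    intros n. rewrite Re_sum_n, sum_n_Reals. simpl. now rewrite minus_sum.
  - eapply is_series_ext;
      [|apply (is_series_plus _ _ _ _ (is_series_mult _ _ _ _ Ha1 Hb2 ReA ImB)
                                      (is_series_mult _ _ _ _ Ha2 Hb1 ImA ReB))].
    intros n. rewrite Im_sum_n, sum_n_Reals. simpl. now rewrite plus_sum.
Qed.

(** * Generating functions *)

Lemma ex_series_abs_pmf (f : nat -> R) : is_pmf1 f -> ex_series (fun n => Rabs (f n)).
Proof.
  intros (_ & Hf & Hs & _). exists 1. eapply is_series_ext; [|exact Hs].
  intros n. now rewrite Rabs_pos_eq.
Qed.

Definition is_gf (f : nat -> R) (x F : C) : Prop :=
  is_Cseries (fun n => RtoC (f n) * x ^ n)%C F.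

Section Generating_functions.

Variable x : C.
Hypothesis Hx : Cmod x <= 1.

Lemma Cmod_coef_pow_le (h : R) n : Cmod (RtoC h * x ^ n) <= Rabs h.
Proof.
  rewrite Cmod_mult, Cmod_R, Cmod_pow.
  pose proof (pow_incr _ _ n (conj (Cmod_ge_0 x) Hx)) as Hpow. rewrite pow1 in Hpow.
  pose proof (pow_le _ n (Cmod_ge_0 x)). pose proof (Rabs_pos h). nra.
Qed.

Lemma ex_series_Cmod_gf (f : nat -> R) :
  ex_series (fun n => Rabs (f n)) -> ex_series (fun n => Cmod (RtoC (f n) * x ^ n)%C).
Proof.
  apply (ex_series_le (V := R_CompleteNormedModule)). intros n. unfold norm; simpl.
  rewrite Rabs_pos_eq by apply Cmod_ge_0. apply Cmod_coef_pow_le.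
Qed.

Lemma is_gf_pgf (f : nat -> R) : ex_series (fun n => Rabs (f n)) -> is_gf f x (pgf f x).
Proof.
  intros Hf.
  destruct (ex_series_le (V := C_CompleteNormedModule) (fun n => RtoC (f n) * x ^ n)%C _
              (fun n => Cmod_coef_pow_le (f n) n) Hf) as [l Hl].
  unfold is_gf, pgf. now rewrite (Cser_correct _ _ Hl).
Qed.

Lemma is_gf_unique (f : nat -> R) F1 F2 : is_gf f x F1 -> is_gf f x F2 -> F1 = F2.
Proof. intros H1 H2. now rewrite <- (Cser_correct _ _ H1), <- (Cser_correct _ _ H2). Qed.

Lemma is_gf_ext (f h : nat -> R) F : (forall n, f n = h n) -> is_gf f x F -> is_gf h x F.
Proof. intros E. apply is_series_ext. intros n. now rewrite E. Qed.

Lemma Cmod_gf_le (f : nat -> R) F M :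
  (forall n, 0 <= f n) -> is_series f M -> is_gf f x F -> Cmod F <= M.
Proof.
  intros Hf HM HF. apply (norm_series_le _ f _ _ HF); [|exact HM].
  intros n. eapply Rle_trans; [apply Cmod_coef_pow_le|]. now rewrite Rabs_pos_eq.
Qed.

Lemma is_gf_plus (f h : nat -> R) F H :
  is_gf f x F -> is_gf h x H -> is_gf (fun n => f n + h n) x (F + H)%C.
Proof.
  intros Hf Hh. eapply is_series_ext; [|exact (is_series_plus _ _ _ _ Hf Hh)].
  intros n. change (RtoC (f n) * x ^ n + RtoC (h n) * x ^ n = RtoC (f n + h n) * x ^ n)%C.
  rewrite RtoC_plus. ring.
Qed.

Lemma is_gf_scal (c : R) (f : nat -> R) F :
  is_gf f x F -> is_gf (fun n => c * f n) x (RtoC c * F)%C.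
Proof.
  intros Hf. eapply is_series_ext; [|exact (is_series_scal_l (RtoC c) _ _ Hf)].
  intros n. change (RtoC c * (RtoC (f n) * x ^ n) = RtoC (c * f n) * x ^ n)%C.
  rewrite RtoC_mult. ring.
Qed.

Lemma is_gf_sum_n_m (f : nat -> nat -> R) (F : nat -> C) m k :
  (forall r, (m <= r <= k)%nat -> is_gf (f r) x (F r)) ->
  is_gf (fun n => sum_n_m (fun r => f r n) m k) x (sum_n_m F m k).
Proof.
  intros HF. eapply is_series_ext;
    [|exact (is_series_sum_n_m (fun r n => RtoC (f r n) * x ^ n)%C F m k HF)].
  intros n. simpl. rewrite RtoC_rsum.
  exact (sum_n_m_mult_r (K := C_Ring) _ (fun r => RtoC (f r n)) m k).
Qed.

Lemma is_gf_finite_support (f : nat -> R) N :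
  (forall n, (N < n)%nat -> f n = 0) ->
  is_gf f x (csum (fun n => RtoC (f n) * x ^ n)%C 0 N).
Proof.
  intros Hf. refine (is_series_finite_support (V := C_NormedModule) _ N _).
  intros n Hn. rewrite Hf by exact Hn. apply Cmult_0_l.
Qed.

Lemma is_gf_shift (f : nat -> R) F N :
  is_gf f x F ->
  is_Cseries (fun k => RtoC (f (S N + k)%nat) * x ^ (S N + k))%C
             (F - csum (fun n => RtoC (f n) * x ^ n) 0 N)%C.
Proof.
  intros HF. apply (is_series_incr_n (fun n => RtoC (f n) * x ^ n)%C (S N)); [lia|].
  simpl pred. unfold sum_n.
  match goal with |- is_series _ ?l => replace l with F; [exact HF|] end.
  assert (E : forall u v : C, u = plus (u - v)%C v)
    by (intros; change (plus ?a ?b) with (a + b)%C; ring).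
  apply E.
Qed.

Lemma is_gf_delay (f : nat -> R) F i :
  f O = 0 -> is_gf f x F -> is_gf (fun n => f (n - i)%nat) x (x ^ i * F)%C.
Proof.
  intros Hf0 HF. destruct i as [|i].
  - apply (is_gf_ext f); [intros n; now rewrite Nat.sub_0_r|]. now rewrite Cmult_1_l.
  - apply (is_series_decr_n _ (S i)); [lia|]. simpl pred. unfold sum_n.
    rewrite (sum_n_m_ext_loc (fun n => RtoC (f (n - S i)%nat) * x ^ n)%C (fun _ => zero))
      by (intros n Hn; replace (n - S i)%nat with O by lia; rewrite Hf0; apply Cmult_0_l).
    rewrite sum_n_m_const_zero.
    match goal with |- is_series _ ?l =>
      replace l with (x ^ S i * F)%C by (change (x ^ S i * F = x ^ S i * F + - RtoC 0)%C; ring) end.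
    eapply is_series_ext; [|exact (is_series_scal_l (x ^ S i)%C _ _ HF)].
    intros k.
    change (x ^ S i * (RtoC (f k) * x ^ k) = RtoC (f (S i + k - S i)%nat) * x ^ (S i + k))%C.
    rewrite Cpow_add_r. replace (S i + k - S i)%nat with k by lia. ring.
Qed.

Lemma pgf_tail (f : nat -> R) F N :
  ex_series (fun n => Rabs (f n)) -> is_gf f x F ->
  (x ^ S N * pgf (fun n => f (n + S N)%nat) x)%C = (F - csum (fun n => RtoC (f n) * x ^ n) 0 N)%C.
Proof.
  intros Ef HF. rewrite <- (Cser_correct _ _ (is_gf_shift f F N HF)). symmetry. apply Cser_correct.
  assert (Ht : is_gf (fun n => f (n + S N)%nat) x (pgf (fun n => f (n + S N)%nat) x)).
  { apply is_gf_pgf. apply (ex_series_ext (fun k => Rabs (f (S N + k)%nat))).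
    - intros k. now rewrite Nat.add_comm.
    - exact (proj1 (ex_series_incr_n (V := R_NormedModule) (fun n => Rabs (f n)) (S N)) Ef). }
  eapply is_series_ext; [|exact (is_series_scal_l (x ^ S N)%C _ _ Ht)]. intros k.
  change (x ^ S N * (RtoC (f (k + S N)%nat) * x ^ k) = RtoC (f (S N + k)%nat) * x ^ (S N + k))%C.
  rewrite Cpow_add_r, Nat.add_comm. ring.
Qed.

Lemma Cser_delay_tail (h : nat -> R) Hh j N :
  h O = 0 -> ex_series (fun n => Rabs (h n)) -> is_gf h x Hh -> (j <= N)%nat ->
  (x ^ N * Cser (fun k => RtoC (h (k + (N + 1 - j))%nat) * x ^ S k))%C =
  (x ^ j * Hh - csum (fun n => RtoC (h (n - j)%nat) * x ^ n) 0 N)%C.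
Proof.
  intros Hh0 Eh HH Hj.
  rewrite <- (Cser_correct _ _ (is_gf_shift _ _ N (is_gf_delay h Hh j Hh0 HH))).
  assert (Eshift : ex_series (fun k => Rabs (h (k + (N + 1 - j))%nat))).
  { apply (ex_series_ext (fun k => Rabs (h ((N + 1 - j) + k)%nat))).
    - intros k. now rewrite Nat.add_comm.
    - exact (proj1 (ex_series_incr_n (V := R_NormedModule) (fun n => Rabs (h n)) _) Eh). }
  destruct (ex_series_le (V := C_CompleteNormedModule)
              (fun k => RtoC (h (k + (N + 1 - j))%nat) * x ^ S k)%C _
              (fun k => Cmod_coef_pow_le _ (S k)) Eshift) as [T HT].
  rewrite (Cser_correct _ _ HT). symmetry. apply Cser_correct.
  eapply is_series_ext; [|exact (is_series_scal_l (x ^ N)%C _ _ HT)]. intros k.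
  change (x ^ N * (RtoC (h (k + (N + 1 - j))%nat) * x ^ S k) =
          RtoC (h (S N + k - j)%nat) * x ^ (S N + k))%C.
  replace (S N + k)%nat with (N + S k)%nat by lia. rewrite Cpow_add_r.
  replace (k + (N + 1 - j))%nat with (N + S k - j)%nat by lia. ring.
Qed.

End Generating_functions.

(** * One slot of group arrivals *)

(* The operator applied to [p_{.,r}(u+1)] and [Q_.(u+1)] in (E3)-(E8). *)
Definition arrive (lam : R) (g f : nat -> R) (n : nat) : R :=
  (1 - lam) * f n + lam * rsum (fun i => g i * f (n - i)%nat) 1 n.

Definition arrival_pgf (lam : R) (g : nat -> R) (x : C) : C :=
  (RtoC (1 - lam) + RtoC lam * pgf g x)%C.

Section Arrivals.

Variables (lam : R) (g : nat -> R).

Lemma arrive_0 (f : nat -> R) : arrive lam g f 0 = (1 - lam) * f O.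
Proof. unfold arrive. rewrite rsum_empty by lia. ring. Qed.

Lemma arrive_plus (f h : nat -> R) n :
  arrive lam g (fun k => f k + h k) n = arrive lam g f n + arrive lam g h n.
Proof.
  unfold arrive.
  replace (rsum (fun i => g i * (f (n - i)%nat + h (n - i)%nat)) 1 n)
    with (rsum (fun i => g i * f (n - i)%nat) 1 n + rsum (fun i => g i * h (n - i)%nat) 1 n)
    by (rewrite <- rsum_plus; apply rsum_ext; intros; ring).
  ring.
Qed.

Lemma arrive_scal (c : R) (f : nat -> R) n :
  arrive lam g (fun k => c * f k) n = c * arrive lam g f n.
Proof.
  unfold arrive.
  replace (rsum (fun i => g i * (c * f (n - i)%nat)) 1 n)
    with (c * rsum (fun i => g i * f (n - i)%nat) 1 n)
    by (rewrite <- rsum_scal; apply rsum_ext; intros; ring).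
  ring.
Qed.

Lemma arrive_rsum (F : nat -> nat -> R) m k n :
  arrive lam g (fun j => rsum (fun r => F r j) m k) n = rsum (fun r => arrive lam g (F r) n) m k.
Proof.
  unfold arrive. rewrite rsum_plus, !rsum_scal. f_equal. f_equal.
  rewrite <- rsum_swap. apply rsum_ext; intros i _. symmetry. apply rsum_scal.
Qed.

Hypothesis Hlam : 0 <= lam <= 1.
Hypothesis Hg : is_pmf1 g.

Lemma arrive_nonneg (f : nat -> R) n : (forall k, 0 <= f k) -> 0 <= arrive lam g f n.
Proof.
  intros Hf. destruct Hg as (_ & Hg0 & _). unfold arrive.
  assert (0 <= rsum (fun i => g i * f (n - i)%nat) 1 n)
    by (apply rsum_nonneg; intros; apply Rmult_le_pos; auto).
  pose proof (Hf n). nra.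
Qed.

Let arrival_coef (k : nat) : R := (if Nat.eqb k 0 then 1 - lam else 0) + lam * g k.

Lemma rsum_arrival_coef (f : nat -> R) n :
  rsum (fun k => arrival_coef k * f (n - k)%nat) 0 n = arrive lam g f n.
Proof.
  destruct Hg as (Hg0 & _). unfold arrive, arrival_coef.
  rewrite rsum_first by lia. simpl Nat.eqb. rewrite Hg0, Nat.sub_0_r.
  rewrite (rsum_ext _ (fun k => lam * (g k * f (n - k)%nat))).
  - rewrite rsum_scal. ring.
  - intros [|k] Hk; [lia|]. simpl. ring.
Qed.

Lemma is_series_arrival_coef : is_series arrival_coef 1.
Proof.
  destruct Hg as (_ & _ & Hs & _).
  assert (H0 := is_series_finite_support (V := R_NormedModule)
                  (fun k => if Nat.eqb k 0 then 1 - lam else 0) 0).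
  rewrite sum_O in H0. specialize (H0 ltac:(intros [|k] Hk; [lia|reflexivity])).
  pose proof (is_series_plus (V := R_NormedModule) _ _ _ _ H0
                (is_series_scal_l (V := R_NormedModule) lam _ _ Hs)) as H.
  match type of H with is_series _ ?l =>
    replace l with 1 in H by (change (1 = 1 - lam + lam * 1); ring) end.
  exact H.
Qed.

Lemma arrival_coef_nonneg k : 0 <= arrival_coef k.
Proof.
  destruct Hg as (_ & Hg0 & _). unfold arrival_coef. pose proof (Hg0 k).
  destruct (Nat.eqb k 0); nra.
Qed.

Lemma is_series_arrive (f : nat -> R) l :
  (forall n, 0 <= f n) -> is_series f l -> is_series (arrive lam g f) l.
Proof.
  intros Hf Hl.
  pose proof (is_series_mult_pos _ _ _ _ is_series_arrival_coef Hl arrival_coef_nonneg Hf) as H.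
  rewrite Rmult_1_l in H. eapply is_series_ext; [|exact H].
  intros n. cbv beta. rewrite <- rsum_arrival_coef, <- sum_n_Reals. reflexivity.
Qed.

Variable x : C.
Hypothesis Hx : Cmod x <= 1.

Lemma is_gf_arrival_coef : is_gf arrival_coef x (arrival_pgf lam g x).
Proof.
  assert (H0 := is_gf_finite_support x (fun k => if Nat.eqb k 0 then 1 - lam else 0) 0).
  unfold csum in H0. rewrite sum_n_n in H0. simpl in H0. rewrite Cmult_1_r in H0.
  apply is_gf_plus; [apply H0; intros [|k] Hk; [lia|reflexivity]|].
  apply is_gf_scal, is_gf_pgf; [exact Hx|]. now apply ex_series_abs_pmf.
Qed.

Lemma is_gf_arrive (f : nat -> R) F :
  ex_series (fun n => Rabs (f n)) -> is_gf f x F ->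
  is_gf (arrive lam g f) x (arrival_pgf lam g x * F)%C.
Proof.
  intros Ef HF.
  assert (Ecoef : ex_series (fun n => Rabs (arrival_coef n))).
  { exists 1. eapply is_series_ext; [|exact is_series_arrival_coef].
    intros n. now rewrite Rabs_pos_eq by apply arrival_coef_nonneg. }
  pose proof (is_Cseries_mult _ _ _ _ is_gf_arrival_coef HF
                (ex_series_Cmod_gf x Hx _ Ecoef) (ex_series_Cmod_gf x Hx _ Ef)) as H.
  eapply is_series_ext; [|exact H]. intros n. simpl.
  rewrite <- rsum_arrival_coef. unfold rsum. rewrite RtoC_rsum.
  rewrite <- (sum_n_m_mult_r (K := C_Ring)). apply sum_n_m_ext_loc. intros k Hk.
  change ((RtoC (arrival_coef k) * x ^ k) * (RtoC (f (n - k)%nat) * x ^ (n - k)) =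
          RtoC (arrival_coef k * f (n - k)%nat) * x ^ n)%C.
  replace (x ^ n)%C with (x ^ k * x ^ (n - k))%C by (rewrite <- Cpow_add_r; f_equal; lia).
  rewrite RtoC_mult. ring.
Qed.

Lemma Cmod_arrival_pgf_le : Cmod (arrival_pgf lam g x) <= 1.
Proof.
  exact (Cmod_gf_le x Hx _ _ _ arrival_coef_nonneg is_series_arrival_coef is_gf_arrival_coef).
Qed.

End Arrivals.

(** * Remaining service and vacation times *)

Lemma telescope_remaining_time (w Cc Sw : C) (F : nat -> C) (s V : nat -> R) :
  Cmod w <= 1 -> s O = 0 -> is_Cseries (fun u => RtoC (s u) * w ^ u)%C Sw ->
  (forall u, (1 <= u)%nat -> F u = (w * F (S u) + RtoC (s u) * Cc)%C) ->
  (forall u, Cmod (F (S u)) <= V u) -> is_lim_seq V 0 ->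
  (w * F 1%nat)%C = (Sw * Cc)%C.
Proof.
  intros Hw Hs0 HS HF HFV HV.
  assert (Hpart : forall k, (w * F 1%nat)%C =
      (Cc * sum_n (fun u => RtoC (s u) * w ^ u)%C k + w ^ S k * F (S k))%C).
  { induction k as [|k IH].
    - rewrite sum_O, Hs0. simpl. ring.
    - rewrite IH, sum_Sn, (HF (S k)) by lia. change (plus ?x ?y) with (x + y)%C.
      rewrite (Cpow_S w (S k)). ring. }
  apply (eq_limit_of_vanishing_error _ _ _ _ Hpart).
  - apply (filterlim_comp _ _ _ _ (fun z : C_NormedModule => scal Cc z) _ (locally Sw));
      [exact HS|]. replace (Sw * Cc)%C with (scal Cc Sw) by apply Cmult_comm.
    exact (filterlim_scal_r (V := C_NormedModule) Cc Sw).
  - apply filterlim_norm_zero.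
    enough (Hlim : is_lim_seq (fun k => Cmod (w ^ S k * F (S k))%C) 0) by exact Hlim.
    apply (is_lim_seq_le_le (fun _ => 0) _ V); [|apply is_lim_seq_const|exact HV].
    intros k. split; [apply Cmod_ge_0|].
    rewrite Cmod_mult, Cmod_pow.
    pose proof (pow_incr _ _ (S k) (conj (Cmod_ge_0 w) Hw)) as Hpow. rewrite pow1 in Hpow.
    pose proof (pow_le _ (S k) (Cmod_ge_0 w)). pose proof (HFV k).
    pose proof (Cmod_ge_0 (F (S k))). nra.
Qed.

(* With [F u] the generating function of [f . u], the recursion reads
   [F u = w F(u+1) + s_u C(x)]; unroll it and let [u] go to infinity. *)
Lemma is_gf_remaining_time (lam : R) (g s c : nat -> R) (f : nat -> nat -> R) (x Cc : C) :
  0 <= lam <= 1 -> is_pmf1 g -> Cmod x <= 1 -> is_pmf1 s ->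
  (forall n u, 0 <= f n u) ->
  (forall n u, (1 <= u)%nat -> f n u = arrive lam g (fun m => f m (S u)) n + s u * c n) ->
  (forall n, ex_series (fun u => f n (S u))) -> ex_series (fun n => Series (fun u => f n (S u))) ->
  is_gf c x Cc ->
  is_gf (arrive lam g (fun m => f m 1%nat)) x (pgf s (arrival_pgf lam g x) * Cc)%C.
Proof.
  intros Hlam Hg Hx Hs Hf Hrec Hrow Hsum HC.
  set (w := arrival_pgf lam g x).
  destruct (ex_series_columns (fun n u => f n (S u)) (fun n u => Hf n (S u)) Hrow Hsum)
    as [Hcol HV].
  assert (Habs : forall u, ex_series (fun n => Rabs (f n (S u)))).
  { intros u. apply (ex_series_ext (fun n => f n (S u))); [|apply Hcol].
    intros n. now rewrite Rabs_pos_eq. }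
  set (F u := pgf (fun n => f n u) x).
  assert (HF : forall u, is_gf (fun n => f n (S u)) x (F (S u))) by (intros; now apply is_gf_pgf).
  assert (Hstep : forall u, (1 <= u)%nat -> F u = (w * F (S u) + RtoC (s u) * Cc)%C).
  { intros [|u] Hu; [lia|]. apply (is_gf_unique x (fun n => f n (S u))); [apply HF|].
    apply (is_gf_ext _ (fun n => arrive lam g (fun m => f m (S (S u))) n + s (S u) * c n));
      [intros; symmetry; apply Hrec; lia|].
    apply is_gf_plus; [apply is_gf_arrive; auto | apply is_gf_scal, HC]. }
  assert (HFV : forall u, Cmod (F (S u)) <= Series (fun n => f n (S u))).
  { intros u. apply (Cmod_gf_le x Hx (fun n => f n (S u)));
      [intros; apply Hf | apply Series_correct, Hcol | apply HF]. }
  pose proof (Cmod_arrival_pgf_le lam g Hlam Hg x Hx) as Hw.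
  rewrite <- (telescope_remaining_time w Cc _ F s _ Hw (proj1 Hs)
                (is_gf_pgf w Hw s (ex_series_abs_pmf s Hs)) Hstep HFV (ex_series_lim_0 _ HV)).
  apply is_gf_arrive; auto.
Qed.

(** * The coefficients [e_coef] *)

Lemma etab_length (g : nat -> R) n k : length (etab g n k) = S k.
Proof. induction k as [|k IH]; [reflexivity|]. simpl. rewrite length_app, IH. simpl. lia. Qed.

Lemma etab_nth_stable (g : nat -> R) n k t :
  (t <= k)%nat -> nth t (etab g n k) 0 = nth t (etab g n t) 0.
Proof.
  induction k as [|k IH]; intros Ht.
  - now replace t with O by lia.
  - destruct (Nat.eq_dec t (S k)) as [->|Hne]; [reflexivity|].
    simpl. rewrite app_nth1 by (rewrite etab_length; lia). apply IH. lia.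
Qed.

Lemma e_coef_diag (g : nat -> R) n : e_coef g n n = 1.
Proof. unfold e_coef. now rewrite Nat.sub_diag. Qed.

Lemma e_coef_rec (g : nat -> R) n i :
  (i < n)%nat -> e_coef g n i = rsum (fun j => e_coef g n j * g (j - i)%nat) (S i) n.
Proof.
  intros Hin. unfold e_coef at 1.
  destruct (n - i)%nat as [|k] eqn:Hk; [lia|].
  simpl etab. rewrite app_nth2 by (rewrite etab_length; lia). rewrite etab_length, Nat.sub_diag.
  replace (n - S k)%nat with i by lia. destruct n as [|n']; [lia|].
  rewrite rsum_last, e_coef_diag, Rmult_1_l by lia. cbn [nth].
  replace (S n' - 1)%nat with n' by lia.
  destruct k as [|k'].
  - replace i with n' by lia. rewrite rsum_empty by lia.
    rewrite Nat.sub_succ_l, Nat.sub_diag by lia. ring.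
  - f_equal. apply rsum_ext. intros j Hj. f_equal. unfold e_coef.
    apply etab_nth_stable. lia.
Qed.

Lemma e_coef_first_step (g : nat -> R) j m :
  g O = 0 -> (m <= j)%nat ->
  rsum (fun n => e_coef g j n * g (n - m)%nat) m j + (if Nat.eqb m j then 1 else 0) = e_coef g j m.
Proof.
  intros Hg0 Hmj. rewrite rsum_first by lia. rewrite Nat.sub_diag, Hg0, Rmult_0_r, Rplus_0_l.
  destruct (Nat.eqb_spec m j) as [->|Hne].
  - rewrite rsum_empty, e_coef_diag by lia. ring.
  - rewrite (e_coef_rec g j m) by lia. ring.
Qed.

Lemma rsum_convolution_reflect (g y : nat -> R) n :
  g O = 0 -> rsum (fun i => g i * y (n - i)%nat) 1 n = rsum (fun m => g (n - m)%nat * y m) 0 n.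
Proof.
  intros Hg0. transitivity (rsum (fun i => g i * y (n - i)%nat) 0 n).
  - rewrite (rsum_first _ 0 n), Hg0 by lia. ring.
  - unfold rsum. rewrite sum_n_m_reflect. apply sum_n_m_ext_loc. intros k Hk.
    f_equal; f_equal; lia.
Qed.

Lemma renewal_inversion (g y q : nat -> R) j :
  g O = 0 ->
  (forall n, (n <= j)%nat -> y n = rsum (fun i => g i * y (n - i)%nat) 1 n + q n) ->
  y j = rsum (fun n => e_coef g j n * q n) 0 j.
Proof.
  intros Hg0 Hy.
  rewrite (rsum_ext _ (fun n => e_coef g j n * y n
                                - rsum (fun m => e_coef g j n * g (n - m)%nat * y m) 0 n)).
  2:{ intros n Hn. rewrite (Hy n) at 1 by lia. rewrite rsum_convolution_reflect by exact Hg0.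
      rewrite (rsum_ext (fun m => e_coef g j n * g (n - m)%nat * y m)
                        (fun m => e_coef g j n * (g (n - m)%nat * y m))) by (intros; ring).
      rewrite rsum_scal. ring. }
  rewrite rsum_minus, rsum_triangle.
  rewrite (rsum_ext (fun m => rsum (fun n => e_coef g j n * g (n - m)%nat * y m) m j)
                    (fun m => e_coef g j m * y m - (if Nat.eqb m j then y m else 0))).
  2:{ intros m Hm. rewrite <- (e_coef_first_step g j m Hg0) by lia.
      rewrite (rsum_ext _ (fun n => y m * (e_coef g j n * g (n - m)%nat))) by (intros; ring).
      rewrite rsum_scal. destruct (Nat.eqb m j); ring. }
  rewrite rsum_minus, rsum_indicator. ring.
Qed.

(** * The numerator of [P^+(x)] *)

(* [tau * p^+_n] and [tau * Q^+_n]. *)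
Definition pplus_raw (a b : nat) (lam : R) (g : nat -> R) (p : nat -> nat -> nat -> R)
  (n : nat) : R :=
  rsum (fun r => arrive lam g (fun m => p m r 1%nat) n) a b.

Definition Qplus_raw (lam : R) (g : nat -> R) (Q : nat -> nat -> R) (n : nat) : R :=
  arrive lam g (fun m => Q m 1%nat) n.

Definition dormant_arrival (a : nat) (g p0 : nat -> R) (n : nat) : R :=
  rsum (fun i => g (n - i)%nat * p0 i) 0 (a - 1).

(* The brackets multiplying [s_r(u)] in (E3), (E5) and [v_u] in (E6), (E7). *)
Definition service_start (a : nat) (lam delta : R) (g p0 pr qr : nat -> R) (n : nat) : R :=
  pr n + qr n + (1 - delta) * lam * dormant_arrival a g p0 n.

Definition vacation_start (delta : R) (pr qr : nat -> R) (n : nat) : R := pr n + delta * qr n.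

Lemma pplus_eq a b lam g p Q n :
  pplus a b lam g p Q n = / tau a b p Q * pplus_raw a b lam g p n.
Proof.
  destruct n as [|n]; [|reflexivity].
  unfold pplus, pplus_raw. f_equal. apply rsum_ext. intros r _. now rewrite arrive_0.
Qed.

Lemma Qplus_eq a b lam g p Q n :
  Qplus a b lam g p Q n = / tau a b p Q * Qplus_raw lam g Q n.
Proof. destruct n as [|n]; [|reflexivity]. unfold Qplus, Qplus_raw. now rewrite arrive_0. Qed.

(* A group of size [i - j] wakes a dormant server with [j] waiting; [min i b] of them are served. *)
Definition wakeup_factor (a b : nat) (g : nat -> R) (K : nat -> C) (x : C) (j : nat) : C :=
  (csum (fun i => RtoC (g (i - j)%nat) * K i) a b
   + Cser (fun k => RtoC (g (k + (b + 1 - j))%nat) * x ^ S k) * K b)%C.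

Definition departure_numerator (a b : nat) (delta : R) (g : nat -> R) (K : nat -> C) (H x : C)
  (pp qq : nat -> R) : C :=
  (csum (fun n => RtoC (pp n) * x ^ n * (H - 1) * K b) 0 (a - 1)
   + csum (fun n => RtoC (qq n) *
        (x ^ n * (RtoC delta * H - 1) * K b
         + x ^ b * RtoC (1 - delta) *
           csum (fun j => RtoC (e_coef g j n) * wakeup_factor a b g K x j) n (a - 1))) 0 (a - 1)
   + csum (fun n => RtoC (pp n + qq n) * (x ^ b * K n - x ^ n * K b)) a (b - 1))%C.

Lemma departure_numerator_scal a b delta g K H x (c : R) (pp qq pp' qq' : nat -> R) :
  (forall n, pp n = c * pp' n) -> (forall n, qq n = c * qq' n) ->
  departure_numerator a b delta g K H x pp qq =
  (RtoC c * departure_numerator a b delta g K H x pp' qq')%C.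
Proof.
  intros Hp Hq. unfold departure_numerator.
  rewrite !Cmult_plus_distr_l, <- !csum_scal_l.
  f_equal; [f_equal|]; apply csum_ext; intros n _;
    rewrite ?Hp, ?Hq, ?RtoC_plus, !RtoC_mult, ?RtoC_plus; ring.
Qed.

Section Numerator.

Variables (a b : nat) (lam delta : R) (g p0 pr qr : nat -> R) (K : nat -> C) (H G x : C).

Hypothesis Hab : (1 <= a <= b)%nat.
Hypothesis Htail : forall i, (i < a)%nat ->
  (x ^ b * Cser (fun k => RtoC (g (k + (b + 1 - i))%nat) * x ^ S k))%C =
  (x ^ i * G - csum (fun n => RtoC (g (n - i)%nat) * x ^ n) 0 b)%C.
Hypothesis Hrenewal : forall j, (j < a)%nat ->
  (1 - delta) * (lam * p0 j) = (1 - delta) * rsum (fun n => e_coef g j n * qr n) 0 j.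

Local Notation D := (service_start a lam delta g p0 pr qr).
Local Notation E := (vacation_start delta pr qr).
Local Notation X := (wakeup_factor a b g K x).
Let c := RtoC ((1 - delta) * lam).
Let Y r := (x ^ b * K r - x ^ r * K b)%C.

Lemma wakeup_factor_identity i :
  (i < a)%nat ->
  (csum (fun r => RtoC (g (r - i)%nat) * Y r) a (b - 1)
   + K b * (x ^ i * G - csum (fun n => RtoC (g (n - i)%nat) * x ^ n) 0 (a - 1)))%C =
  (x ^ b * X i)%C.
Proof.
  intros Hi. unfold wakeup_factor, Y.
  replace (x ^ i * G)%C with (x ^ b * Cser (fun k => RtoC (g (k + (b + 1 - i))%nat) * x ^ S k)
                              + csum (fun n => RtoC (g (n - i)%nat) * x ^ n) 0 b)%C
    by (rewrite Htail by exact Hi; ring).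
  rewrite (csum_cut _ 0 a b), (csum_last _ a b),
    (csum_last (fun r => RtoC (g (r - i)%nat) * K r)%C a b) by lia.
  rewrite (csum_ext _ (fun r => x ^ b * (RtoC (g (r - i)%nat) * K r)
                                + (- K b) * (RtoC (g (r - i)%nat) * x ^ r))%C)
    by (intros; ring).
  rewrite csum_lin. ring.
Qed.

Lemma dormant_contribution :
  (csum (fun r => RtoC (dormant_arrival a g p0 r) * Y r) a (b - 1)
   + K b * (csum (fun i => RtoC (p0 i) * (x ^ i * G)) 0 (a - 1)
            - csum (fun n => RtoC (dormant_arrival a g p0 n) * x ^ n) 0 (a - 1)))%C =
  (x ^ b * csum (fun i => RtoC (p0 i) * X i) 0 (a - 1))%C.
Proof.
  assert (Hexpand : forall (Z : nat -> C) m n,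
    csum (fun r => RtoC (dormant_arrival a g p0 r) * Z r)%C m n =
    csum (fun i => RtoC (p0 i) * csum (fun r => RtoC (g (r - i)%nat) * Z r)%C m n)%C 0 (a - 1)).
  { intros Z m n.
    transitivity
      (csum (fun r => csum (fun i => RtoC (p0 i) * (RtoC (g (r - i)%nat) * Z r))%C 0 (a - 1)) m n).
    - apply csum_ext. intros r _. unfold dormant_arrival. rewrite RtoC_rsum, <- csum_scal_r.
      apply csum_ext. intros i _. rewrite RtoC_mult. ring.
    - rewrite csum_swap. apply csum_ext. intros i _. apply csum_scal_l. }
  rewrite !Hexpand, <- csum_scal_l.
  rewrite (csum_ext (fun i => x ^ b * (RtoC (p0 i) * X i))%C
     (fun i => (RtoC (p0 i) * csum (fun r => RtoC (g (r - i)%nat) * Y r) a (b - 1)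
                + K b * (RtoC (p0 i) * (x ^ i * G)))
               + (- K b) *
                 (RtoC (p0 i) * csum (fun n => RtoC (g (n - i)%nat) * x ^ n) 0 (a - 1)))%C)
    by (intros i Hi; transitivity (RtoC (p0 i) * (x ^ b * X i))%C; [ring|];
        rewrite <- wakeup_factor_identity by lia; ring).
  rewrite !csum_plus, !csum_scal_l. ring.
Qed.

Lemma renewal_contribution :
  (c * csum (fun i => RtoC (p0 i) * X i) 0 (a - 1))%C =
  csum (fun n => RtoC (qr n) *
                 (RtoC (1 - delta) * csum (fun j => RtoC (e_coef g j n) * X j) n (a - 1)))%C
       0 (a - 1).
Proof.
  unfold c. rewrite <- csum_scal_l.
  rewrite (csum_ext (fun i => RtoC ((1 - delta) * lam) * (RtoC (p0 i) * X i))%C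
                    (fun i => RtoC (1 - delta) *
                              csum (fun n => RtoC (e_coef g i n * qr n) * X i) 0 i)%C).
  2:{ intros i Hi. rewrite Cmult_assoc, <- RtoC_mult, Rmult_assoc, Hrenewal by lia.
      rewrite RtoC_mult, RtoC_rsum, csum_scal_r. ring. }
  rewrite csum_scal_l, csum_triangle, <- csum_scal_l. apply csum_ext. intros n _.
  rewrite <- !csum_scal_l. apply csum_ext. intros j _. rewrite RtoC_mult. ring.
Qed.

Lemma service_contribution :
  (x ^ b * csum (fun r => K r * RtoC (D r)) a (b - 1)
   - K b * csum (fun n => RtoC (D n) * x ^ n) a (b - 1))%C =
  (csum (fun n => RtoC (pr n + qr n) * Y n) a (b - 1)
   + c * csum (fun r => RtoC (dormant_arrival a g p0 r) * Y r) a (b - 1))%C.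
Proof.
  transitivity
    (csum (fun r => x ^ b * (K r * RtoC (D r)) + (- K b) * (RtoC (D r) * x ^ r)) a (b - 1))%C;
    [rewrite csum_lin; ring|].
  transitivity (csum (fun r => 1 * (RtoC (pr r + qr r) * Y r)
                               + c * (RtoC (dormant_arrival a g p0 r) * Y r)) a (b - 1))%C;
    [|rewrite csum_lin; ring].
  apply csum_ext. intros r _. unfold c, Y, service_start. rewrite !RtoC_plus, !RtoC_mult. ring.
Qed.

Lemma idle_contribution :
  (K b * (H * csum (fun n => RtoC (E n) * x ^ n) 0 (a - 1)
          - csum (fun n => RtoC (D n) * x ^ n) 0 (a - 1)))%C =
  (csum (fun n => RtoC (pr n) * x ^ n * (H - 1) * K b) 0 (a - 1)
   + csum (fun n => RtoC (qr n) * (x ^ n * (RtoC delta * H - 1) * K b)) 0 (a - 1)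
   - c * (K b * csum (fun n => RtoC (dormant_arrival a g p0 n) * x ^ n) 0 (a - 1)))%C.
Proof.
  transitivity
    (csum (fun n => (K b * H) * (RtoC (E n) * x ^ n) + (- K b) * (RtoC (D n) * x ^ n)) 0 (a - 1))%C;
    [rewrite csum_lin; ring|].
  transitivity (csum (fun n => (1 * (RtoC (pr n) * x ^ n * (H - 1) * K b)
                                + 1 * (RtoC (qr n) * (x ^ n * (RtoC delta * H - 1) * K b)))
                               + (- c * K b) * (RtoC (dormant_arrival a g p0 n) * x ^ n)) 0 (a - 1))%C;
    [|rewrite csum_plus, csum_lin, csum_scal_l; ring].
  apply csum_ext. intros n _. unfold c, service_start, vacation_start.
  rewrite !RtoC_plus, !RtoC_mult. ring.
Qed.

Lemma departure_numerator_eq (Db : C) :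
  (x ^ b * Db =
     csum (fun r => K r * RtoC (D r)) a (b - 1) + K b * Db
     + H * csum (fun n => RtoC (E n) * x ^ n) 0 (a - 1)
     + RtoC ((1 - delta) * lam) * csum (fun i => RtoC (p0 i) * (x ^ i * G)) 0 (a - 1)
     - csum (fun n => RtoC (D n) * x ^ n) 0 (b - 1))%C ->
  ((x ^ b - K b) * (csum (fun r => K r * RtoC (D r)) a (b - 1) + K b * Db))%C =
  departure_numerator a b delta g K H x pr qr.
Proof.
  intros Hshift. fold c in Hshift.
  rewrite (csum_cut _ 0 a (b - 1)) in Hshift by lia.
  assert (Hsplit : ((x ^ b - K b) * (csum (fun r => K r * RtoC (D r)) a (b - 1) + K b * Db))%C =
    ((x ^ b * csum (fun r => K r * RtoC (D r)) a (b - 1)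
      - K b * csum (fun n => RtoC (D n) * x ^ n) a (b - 1))
     + K b * (H * csum (fun n => RtoC (E n) * x ^ n) 0 (a - 1)
              - csum (fun n => RtoC (D n) * x ^ n) 0 (a - 1))
     + c * (K b * csum (fun i => RtoC (p0 i) * (x ^ i * G)) 0 (a - 1)))%C).
  { transitivity (x ^ b * csum (fun r => K r * RtoC (D r)) a (b - 1) + K b * (x ^ b * Db)
                  - K b * (csum (fun r => K r * RtoC (D r)) a (b - 1) + K b * Db))%C; [ring|].
    rewrite Hshift. ring. }
  rewrite Hsplit, service_contribution, idle_contribution.
  transitivity (csum (fun n => RtoC (pr n) * x ^ n * (H - 1) * K b) 0 (a - 1)
     + csum (fun n => RtoC (qr n) * (x ^ n * (RtoC delta * H - 1) * K b)) 0 (a - 1)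
     + csum (fun n => RtoC (pr n + qr n) * Y n) a (b - 1)
     + c * (x ^ b * csum (fun i => RtoC (p0 i) * X i) 0 (a - 1)))%C.
  { rewrite <- dormant_contribution. ring. }
  replace (c * (x ^ b * csum (fun i => RtoC (p0 i) * X i) 0 (a - 1)))%C
    with (x ^ b * (c * csum (fun i => RtoC (p0 i) * X i) 0 (a - 1)))%C by ring.
  rewrite renewal_contribution. unfold departure_numerator, Y.
  rewrite (csum_ext (fun n => RtoC (qr n) * (x ^ n * (RtoC delta * H - 1) * K b
             + x ^ b * RtoC (1 - delta) * csum (fun j => RtoC (e_coef g j n) * X j) n (a - 1)))%C
           (fun n => 1 * (RtoC (qr n) * (x ^ n * (RtoC delta * H - 1) * K b))
             + x ^ b * (RtoC (qr n) *
                        (RtoC (1 - delta) * csum (fun j => RtoC (e_coef g j n) * X j) n (a - 1))))%C)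
    by (intros; ring).
  rewrite csum_lin. ring.
Qed.

End Numerator.

(** * The stationary equations *)

Section Stationary_model.

Variables (a b : nat) (lam delta : R) (g : nat -> R) (s : nat -> nat -> R) (v : nat -> R)
  (p0 : nat -> R) (p : nat -> nat -> nat -> R) (Q : nat -> nat -> R).

Hypothesis Hst : stationary a b lam delta g s v p0 p Q.
Hypothesis Hab : (1 <= a <= b)%nat.
Hypothesis Hlam : 0 <= lam <= 1.
Hypothesis Hdelta : delta = 0 \/ delta = 1.
Hypothesis Hg : is_pmf1 g.
Hypothesis Hs : forall r, (a <= r <= b)%nat -> is_pmf1 (s r).
Hypothesis Hv : is_pmf1 v.

Local Notation pr := (pplus_raw a b lam g p).
Local Notation qr := (Qplus_raw lam g Q).
Local Notation D := (service_start a lam delta g p0 pr qr).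
Local Notation E := (vacation_start delta pr qr).

Lemma p_recursion_below_b r n u : (a <= r < b)%nat -> (1 <= u)%nat ->
  p n r u = arrive lam g (fun m => p m r (S u)) n + s r u * (if Nat.eqb n 0 then D r else 0).
Proof.
  intros Hr Hu. destruct Hst as (_ & _ & _ & _ & _ & E3 & E4 & _).
  destruct n as [|n].
  - rewrite (E3 r u) by lia. rewrite arrive_0. simpl Nat.eqb.
    unfold service_start, pplus_raw, Qplus_raw, dormant_arrival, arrive. ring.
  - rewrite (E4 (S n) r u) by lia. unfold arrive. simpl. ring.
Qed.

Lemma p_recursion_at_b n u : (1 <= u)%nat ->
  p n b u = arrive lam g (fun m => p m b (S u)) n + s b u * D (n + b)%nat.
Proof.
  intros Hu. destruct Hst as (_ & _ & _ & _ & _ & E3 & _ & E5 & _).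
  destruct n as [|n].
  - rewrite (E3 b u) by lia. rewrite arrive_0. simpl Nat.add.
    unfold service_start, pplus_raw, Qplus_raw, dormant_arrival, arrive. ring.
  - rewrite (E5 (S n) u) by lia.
    unfold service_start, pplus_raw, Qplus_raw, dormant_arrival, arrive. ring.
Qed.

Lemma vacation_start_arrive n :
  E n = arrive lam g (fun k => rsum (fun m => p k m 1%nat) a b + delta * Q k 1%nat) n.
Proof. now rewrite arrive_plus, arrive_scal, arrive_rsum. Qed.

Lemma Q_recursion n u : (1 <= u)%nat ->
  Q n u = arrive lam g (fun m => Q m (S u)) n + v u * (if Nat.ltb n a then E n else 0).
Proof.
  intros Hu. destruct Hst as (_ & _ & _ & _ & _ & _ & _ & _ & E6 & E7 & E8 & _).
  destruct (Nat.ltb_spec n a) as [Hn|Hn].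
  - rewrite vacation_start_arrive. destruct n as [|n].
    + rewrite (E6 u Hu), !arrive_0. ring.
    + rewrite (E7 (S n) u) by lia. unfold arrive. ring.
  - rewrite (E8 n u Hn Hu). unfold arrive. ring.
Qed.

Lemma ex_series_state_masses :
  (forall r, (a <= r <= b)%nat -> ex_series (fun n => Series (fun u => p n r (S u)))) /\
  ex_series (fun n => Series (fun u => Q n (S u))).
Proof.
  destruct Hst as (_ & Hp & HQ & _ & _ & _ & _ & _ & _ & _ & _ & Exp & ExQ & HN).
  assert (Sp : forall n r, 0 <= Series (fun u => p n r (S u)))
    by (intros; apply Series_nonneg; auto).
  assert (SQ : forall n, 0 <= Series (fun u => Q n (S u))) by (intros; apply Series_nonneg; auto).
  assert (Htot : ex_series (fun n => rsum (fun r => Series (fun u => p n r (S u))) a b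
                                      + Series (fun u => Q n (S u)))) by (eexists; exact HN).
  split.
  - intros r Hr. refine (ex_series_le (V := R_CompleteNormedModule) _ _ _ Htot).
    intros n. unfold norm; simpl. rewrite Rabs_pos_eq by apply Sp.
    pose proof (rsum_term_le (fun r => Series (fun u => p n r (S u))) a b r (Sp n) Hr).
    pose proof (SQ n). lra.
  - refine (ex_series_le (V := R_CompleteNormedModule) _ _ _ Htot).
    intros n. unfold norm; simpl. rewrite Rabs_pos_eq by apply SQ.
    pose proof (rsum_nonneg (fun r => Series (fun u => p n r (S u))) a b (Sp n)). lra.
Qed.

Lemma ex_series_p_at_1 r : (a <= r <= b)%nat -> ex_series (fun n => p n r 1%nat).
Proof.
  intros Hr. destruct Hst as (_ & Hp & _ & _ & _ & _ & _ & _ & _ & _ & _ & Exp & _).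
  refine (ex_series_le (V := R_CompleteNormedModule) _ _ _ (proj1 ex_series_state_masses r Hr)).
  intros n. unfold norm; simpl. rewrite Rabs_pos_eq by apply Hp.
  apply (term_le_series (fun u => p n r (S u)) _ 0); [auto | apply Series_correct, Exp].
Qed.

Lemma ex_series_Q_at_1 : ex_series (fun n => Q n 1%nat).
Proof.
  destruct Hst as (_ & _ & HQ & _ & _ & _ & _ & _ & _ & _ & _ & _ & ExQ & _).
  refine (ex_series_le (V := R_CompleteNormedModule) _ _ _ (proj2 ex_series_state_masses)).
  intros n. unfold norm; simpl. rewrite Rabs_pos_eq by apply HQ.
  apply (term_le_series (fun u => Q n (S u)) _ 0); [auto | apply Series_correct, ExQ].
Qed.

Lemma service_start_nonneg n : 0 <= D n.
Proof.
  destruct Hst as (Hp0 & Hp & HQ & _). destruct Hg as (_ & Hg0 & _).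
  unfold service_start, pplus_raw, Qplus_raw, dormant_arrival.
  assert (0 <= rsum (fun r => arrive lam g (fun m => p m r 1%nat) n) a b)
    by (apply rsum_nonneg; intros; apply arrive_nonneg; auto).
  assert (0 <= arrive lam g (fun m => Q m 1%nat) n) by (apply arrive_nonneg; auto).
  assert (0 <= rsum (fun i => g (n - i)%nat * p0 i) 0 (a - 1))
    by (apply rsum_nonneg; intros; apply Rmult_le_pos; auto).
  assert (0 <= (1 - delta) * lam) by (destruct Hdelta; subst; nra).
  nra.
Qed.

Lemma ex_series_service_start : ex_series D.
Proof.
  destruct Hst as (_ & Hp & HQ & _). destruct Hg as (_ & _ & Hgs & _).
  assert (Harr : forall f, (forall m, 0 <= f m) -> ex_series f -> ex_series (arrive lam g f))
    by (intros f Hf [l Hl]; exists l; now apply is_series_arrive).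
  unfold service_start.
  apply (ex_series_plus (V := R_NormedModule)); [apply (ex_series_plus (V := R_NormedModule))|].
  - apply ex_series_rsum. intros r Hr. apply Harr; [auto|]. now apply ex_series_p_at_1.
  - apply Harr; [auto|]. exact ex_series_Q_at_1.
  - apply (ex_series_scal_l (V := R_NormedModule)). apply ex_series_rsum. intros i _.
    apply (ex_series_scal_r). apply (ex_series_incr_n (V := R_NormedModule) _ i).
    apply (ex_series_ext g); [intros k; f_equal; lia | exists 1; exact Hgs].
Qed.

Variable x : C.
Hypothesis Hx : Cmod x <= 1.

Lemma is_gf_pplus_raw :
  is_gf pr x (csum (fun r => Kf lam g s r x * RtoC (D r)) a (b - 1)
              + Kf lam g s b x * pgf (fun n => D (n + b)%nat) x)%C.
Proof.
  destruct Hst as (_ & Hp & _ & _ & _ & _ & _ & _ & _ & _ & _ & Exp & _).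
  apply (is_gf_ext x (fun n => rsum (fun r => arrive lam g (fun m => p m r 1%nat) n) a (b - 1)
                             + arrive lam g (fun m => p m b 1%nat) n)).
  { intros n. unfold pplus_raw. destruct b as [|b']; [lia|].
    rewrite rsum_last by lia. now replace (S b' - 1)%nat with b' by lia. }
  apply is_gf_plus.
  - apply is_gf_sum_n_m. intros r Hr.
    assert (Hc := is_gf_finite_support x (fun n => if Nat.eqb n 0 then D r else 0) 0).
    unfold csum in Hc. rewrite sum_n_n, Cmult_1_r in Hc. cbn [Nat.eqb] in Hc.
    apply (is_gf_remaining_time lam g (s r) (fun n => if Nat.eqb n 0 then D r else 0)
             (fun n u => p n r u)); auto.
    + apply Hs. lia.
    + intros n u Hu. apply p_recursion_below_b; lia.
    + apply ex_series_state_masses. lia.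
    + apply Hc. intros [|n] Hn; [lia|reflexivity].
  - apply (is_gf_remaining_time lam g (s b) (fun n => D (n + b)%nat) (fun n u => p n b u)); auto.
    + apply Hs. lia.
    + intros n u Hu. apply p_recursion_at_b; lia.
    + apply ex_series_state_masses. lia.
    + apply is_gf_pgf; [exact Hx|].
      apply (ex_series_ext (fun n => D (b + n)%nat)).
      * intros n. rewrite Rabs_pos_eq by apply service_start_nonneg. f_equal. lia.
      * exact (proj1 (ex_series_incr_n (V := R_NormedModule) _ b) ex_series_service_start).
Qed.

Lemma is_gf_Qplus_raw :
  is_gf qr x (Hf lam g v x * csum (fun n => RtoC (E n) * x ^ n) 0 (a - 1))%C.
Proof.
  destruct Hst as (_ & _ & HQ & _ & _ & _ & _ & _ & _ & _ & _ & _ & ExQ & _).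
  assert (Hc := is_gf_finite_support x (fun n => if Nat.ltb n a then E n else 0) (a - 1)).
  apply (is_gf_remaining_time lam g v (fun n => if Nat.ltb n a then E n else 0) Q); auto.
  - intros n u Hu. now apply Q_recursion.
  - exact (proj2 ex_series_state_masses).
  - replace (csum (fun n => RtoC (E n) * x ^ n) 0 (a - 1))%C
      with (csum (fun n => RtoC (if Nat.ltb n a then E n else 0) * x ^ n) 0 (a - 1))%C.
    + apply Hc. intros n Hn. destruct (Nat.ltb_spec n a); [lia|reflexivity].
    + apply sum_n_m_ext_loc. intros n Hn. destruct (Nat.ltb_spec n a); [reflexivity|lia].
Qed.

Lemma is_gf_dormant_arrival :
  is_gf (dormant_arrival a g p0) x (csum (fun i => RtoC (p0 i) * (x ^ i * pgf g x)) 0 (a - 1))%C.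
Proof.
  destruct Hg as (Hg0 & _).
  apply is_gf_sum_n_m. intros i _.
  apply (is_gf_ext x (fun n => p0 i * g (n - i)%nat)); [intros; apply Rmult_comm|].
  apply is_gf_scal, is_gf_delay; [exact Hg0|].
  apply is_gf_pgf; [exact Hx|]. now apply ex_series_abs_pmf.
Qed.

Lemma service_start_tail :
  (x ^ b * pgf (fun n => D (n + b)%nat) x)%C =
  (csum (fun r => Kf lam g s r x * RtoC (D r)) a (b - 1)
   + Kf lam g s b x * pgf (fun n => D (n + b)%nat) x
   + Hf lam g v x * csum (fun n => RtoC (E n) * x ^ n) 0 (a - 1)
   + RtoC ((1 - delta) * lam) * csum (fun i => RtoC (p0 i) * (x ^ i * pgf g x)) 0 (a - 1)
   - csum (fun n => RtoC (D n) * x ^ n) 0 (b - 1))%C.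
Proof.
  assert (HD : is_gf D x
    (csum (fun r => Kf lam g s r x * RtoC (D r)) a (b - 1)
   + Kf lam g s b x * pgf (fun n => D (n + b)%nat) x
     + Hf lam g v x * csum (fun n => RtoC (E n) * x ^ n) 0 (a - 1)
     + RtoC ((1 - delta) * lam) * csum (fun i => RtoC (p0 i) * (x ^ i * pgf g x)) 0 (a - 1))%C).
  { apply is_gf_plus; [apply is_gf_plus|apply is_gf_scal].
    - exact is_gf_pplus_raw.
    - exact is_gf_Qplus_raw.
    - exact is_gf_dormant_arrival. }
  assert (ED : ex_series (fun n => Rabs (D n))).
  { apply (ex_series_ext D); [intros n; symmetry; apply Rabs_pos_eq, service_start_nonneg|].
    exact ex_series_service_start. }
  destruct b as [|b']; [lia|]. replace (S b' - 1)%nat with b' in * by lia.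
  now rewrite (pgf_tail x Hx _ _ b' ED HD).
Qed.

Lemma dormant_renewal j : (j < a)%nat ->
  (1 - delta) * (lam * p0 j) = (1 - delta) * rsum (fun n => e_coef g j n * qr n) 0 j.
Proof.
  intros Hj. destruct Hdelta as [Hd|Hd]; subst delta; [|ring].
  f_equal.
  destruct Hst as (_ & _ & _ & E1 & E2 & _). destruct Hg as (Hg0 & _).
  apply (renewal_inversion g (fun n => lam * p0 n) qr j); [exact Hg0|]. intros n Hn.
  rewrite (rsum_ext _ (fun i => lam * (g i * p0 (n - i)%nat))) by (intros; ring).
  rewrite rsum_scal. unfold Qplus_raw, arrive. destruct n as [|n].
  - rewrite rsum_empty by lia. rewrite rsum_empty by lia. lra.
  - pose proof (E2 (S n) ltac:(lia)). lra.
Qed.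

Lemma departure_pgf_identity :
  exists P : C, is_gf pr x P /\
    ((x ^ b - Kf lam g s b x) * P)%C =
    departure_numerator a b delta g (fun r => Kf lam g s r x) (Hf lam g v x) x pr qr.
Proof.
  eexists. split; [exact is_gf_pplus_raw|].
  destruct Hg as (Hg0 & _).
  apply (departure_numerator_eq a b lam delta g p0 pr qr (fun r => Kf lam g s r x) (Hf lam g v x)
           (pgf g x) x Hab).
  - intros i Hi. apply Cser_delay_tail; auto; [now apply ex_series_abs_pmf | | lia].
    apply is_gf_pgf; [exact Hx|]. now apply ex_series_abs_pmf.
  - exact dormant_renewal.
  - exact service_start_tail.
Qed.

End Stationary_model.

Theorem mainTheorem4 (a b : nat) (lam delta : R) (g : nat -> R)
  (s : nat -> nat -> R) (v : nat -> R)
  (p0 : nat -> R) (p : nat -> nat -> nat -> R) (Q : nat -> nat -> R) :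
  (1 <= a)%nat -> (a <= b)%nat ->
  0 < lam < 1 ->
  (delta = 0 \/ delta = 1) ->
  is_pmf1 g ->
  (forall r, (a <= r <= b)%nat -> is_pmf1 (s r)) ->
  is_pmf1 v ->
  (* rho = lam * gbar / (b * mu_b) < 1, with mu_b = 1 / s_b *)
  lam * mean g * mean (s b) / INR b < 1 ->
  stationary a b lam delta g s v p0 p Q ->
  forall x : C, Cmod x <= 1 ->
  Cpow x b <> Kf lam g s b x ->
  pgf (pplus a b lam g p Q) x =
  (( csum (fun n => RtoC (pplus a b lam g p Q n) * Cpow x n
                     * (Hf lam g v x - 1) * Kf lam g s b x) 0 (a - 1)
   + csum (fun n => RtoC (Qplus a b lam g p Q n) *
        (Cpow x n * (RtoC delta * Hf lam g v x - 1) * Kf lam g s b x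
         + Cpow x b * RtoC (1 - delta) *
           csum (fun j => RtoC (e_coef g j n) *
                  (csum (fun i => RtoC (g (i - j)%nat) * Kf lam g s i x) a b
                   + Cser (fun k => RtoC (g (k + (b + 1 - j))%nat) * Cpow x (S k))
                     * Kf lam g s b x)) n (a - 1))) 0 (a - 1)
   + csum (fun n => RtoC (pplus a b lam g p Q n + Qplus a b lam g p Q n) *
        (Cpow x b * Kf lam g s n x - Cpow x n * Kf lam g s b x)) a (b - 1))
   / (Cpow x b - Kf lam g s b x))%C.
Proof.
  intros Ha Hab Hlam Hdelta Hg Hs Hv _ Hst x Hx Hne.
  destruct (departure_pgf_identity a b lam delta g s v p0 p Q Hst (conj Ha Hab) ltac:(lra)
              Hdelta Hg Hs Hv x Hx) as [P [HP Hnum]].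
  change (pgf (pplus a b lam g p Q) x =
          departure_numerator a b delta g (fun r => Kf lam g s r x) (Hf lam g v x) x
            (pplus a b lam g p Q) (Qplus a b lam g p Q) / (x ^ b - Kf lam g s b x))%C.
  rewrite (departure_numerator_scal _ _ _ _ _ _ _ (/ tau a b p Q) _ _ _ _ (pplus_eq a b lam g p Q)
             (Qplus_eq a b lam g p Q)), <- Hnum.
  assert (HP' : is_gf (pplus a b lam g p Q) x (RtoC (/ tau a b p Q) * P)%C)
    by exact (is_gf_ext x _ _ _ (fun n => eq_sym (pplus_eq a b lam g p Q n))
                (is_gf_scal x _ _ _ HP)).
  unfold pgf. rewrite (Cser_correct _ _ HP').
  field. intros Hz. apply Hne.
  replace (x ^ b)%C with (x ^ b - Kf lam g s b x + Kf lam g s b x)%C by ring. rewrite Hz. ring.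
Qed.
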